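(* The family $\mathfrak{F}^*=\{\tilde{\omega},\tilde{\omega^*}\}\cup\{\tilde{L}_n:n\geq 2\}$ is not $E_3$-learnable.
   Context: Partial orders are structures in the language $\{\leq\}$. $\omega$ and $\omega^*$ are the linear orders of the natural numbers and of the negative integers; $L_n$ is the finite linear order with $n$ elements. For a partial order $L$, $\tilde{L}$ is $L$ together with infinitely many new elements that are pairwise incomparable and incomparable to the elements of $L$ (presented with domain $\mathbb{N}$). All structures have domain $\mathbb{N}$ and are identified with their atomic diagrams (elements of $2^{\mathbb{N}}$). For a family $\mathfrak{K}$, $\mathrm{LD}(\mathfrak{K})\subseteq 2^{\mathbb{N}}$ is the set of structures with domain $\mathbb{N}$ isomorphic to a member of $\mathfrak{K}$ (subspace topology). For an equivalence relation $E$ on a space $X$, $\mathfrak{K}$ is $E$-learnable if there is a continuous $\Gamma:\mathrm{LD}(\mathfrak{K})\to X$ with $\mathcal{S}\cong\mathcal{S}'\iff\Gamma(\mathcal{S})E\Gamma(\mathcal{S}')$ for all $\mathcal{S},\mathcal{S}'\in\mathrm{LD}(\mathfrak{K})$. Fix a computable bijection $\langle\cdot,\cdot\rangle:\mathbb{N}^2\to\mathbb{N}$; for $p\in\mathbb{N}^{\mathbb{N}\times\mathbb{N}}$ let $p^{[m]}(n)=p(\langle m,n\rangle)$; $E_0$ on $\mathbb{N}^{\mathbb{N}}$: $p\,E_0\,q\iff\exists m\forall n\ge m\ p(n)=q(n)$; $E_3$ on $\mathbb{N}^{\mathbb{N}\times\mathbb{N}}$: $p\,E_3\,q\iff\forall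 m\ p^{[m]}E_0q^{[m]}$. *)

From Stdlib Require Import Arith Bool.


(* A structure in the language {<=} with domain nat, identified with its
   atomic diagram: the interpretation of <= as a boolean relation on nat.
   (Equality atoms are fixed, so this is the atomic diagram up to a
   computable recoding of 2^N.) *)
Definition Structure := nat -> nat -> bool.

Definition iso (S S' : Structure) : Prop :=
  exists f g : nat -> nat,
    (forall x, g (f x) = x) /\ (forall y, f (g y) = y) /\
    (forall i j, S i j = S' (f i) (f j)).

(* \tilde{omega}: even numbers 2k form omega, odd numbers are new
   pairwise incomparable elements (only reflexive). *)
Definition tilde_omega : Structure := fun x y =>
  if andb (Nat.even x) (Nat.even y) then Nat.leb (Nat.div2 x) (Nat.div2 y)
  else Nat.eqb x y.

(* \tilde{omega_star}: even numbers 2k form omega_star (reverse order). *)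
Definition tilde_omega_star : Structure := fun x y =>
  if andb (Nat.even x) (Nat.even y) then Nat.leb (Nat.div2 y) (Nat.div2 x)
  else Nat.eqb x y.

(* \tilde{L_n}: 0 < ... < n-1 linearly ordered, all x >= n are new
   pairwise incomparable elements. *)
Definition tilde_L (n : nat) : Structure := fun x y =>
  if andb (Nat.ltb x n) (Nat.ltb y n) then Nat.leb x y else Nat.eqb x y.

Definition in_Fstar (K : Structure) : Prop :=
  K = tilde_omega \/ K = tilde_omega_star \/
  exists n, 2 <= n /\ K = tilde_L n.

Definition LD_Fstar (S : Structure) : Prop :=
  exists K, in_Fstar K /\ iso S K.

(* The space N^{N x N}, with p^{[m]}(n) = p m n. *)
Definition Space := nat -> nat -> nat.

Definition E0 (p q : nat -> nat) : Prop :=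
  exists k, forall n, k <= n -> p n = q n.

Definition E3 (p q : Space) : Prop := forall m, E0 (p m) (q m).

(* Continuity of Gamma : LD -> N^{N x N} (product topology, 2 and N
   discrete, subspace topology on the domain): each output coordinate
   is determined on a neighbourhood by a finite part of the diagram. *)
Definition continuous_on (D : Structure -> Prop) (G : Structure -> Space) :=
  forall S, D S -> forall m n, exists k, forall S', D S' ->
    (forall i j, i < k -> j < k -> S' i j = S i j) ->
    G S' m n = G S m n.

Definition learnable_E3 (D : Structure -> Prop) : Prop :=
  exists G : Structure -> Space, continuous_on D G /\
    forall S S', D S -> D S' -> (iso S S' <-> E3 (G S) (G S')).

From Stdlib Require Import Arith Bool Lia Classical ClassicalEpsilon FunctionalExtensionality.

(* Suppose [G] continuously reduces isomorphism on [LD_Fstar] to [E3].  Since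
   ~omega and ~omega* are not isomorphic, some column [m] of their images is
   E0-inequivalent.  For each W in {~omega, ~omega*}, column [m] of
   [G ~L_N] is E0-equivalent to that of [G W] for all large [N]; one large [N]
   then links the two columns, a contradiction.  If instead infinitely many
   [~L_N] were E0-inequivalent to W in column [m], build a copy of W as the
   limit of copies of such finite orders, appending at stage [j] a block of
   new chain elements and then moving far enough out that, by continuity, a
   position [>= j] where the current finite stage disagrees with [G W] is
   frozen in the limit.  The limit is a copy of W whose column [m] disagrees
   with that of [G W] arbitrarily far out. *)

Fixpoint rank (P : nat -> bool) (x : nat) : nat :=
  match x with 0 => 0 | S x' => rank P x' + (if P x' then 1 else 0) end.

Definition predC (P : nat -> bool) (x : nat) : bool := negb (P x).

Lemma predC_true P x : predC P x = true <-> P x = false.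
Proof. unfold predC. destruct (P x); simpl; split; congruence. Qed.

Lemma rank_mono P x y : x <= y -> rank P x <= rank P y.
Proof. induction 1 as [|y _ IH]; simpl; [lia|]. destruct (P y); lia. Qed.

Lemma rank_lt P x y : P x = true -> x < y -> rank P x < rank P y.
Proof.
  intros Px xy. pose proof (rank_mono P (S x) y xy) as H. simpl in H. rewrite Px in H. lia.
Qed.

Lemma rank_le_iff P x y : P x = true -> P y = true -> (x <= y <-> rank P x <= rank P y).
Proof.
  intros Px Py; split; [apply rank_mono|intro H].
  destruct (le_lt_dec x y) as [|yx]; auto. pose proof (rank_lt P y x Py yx). lia.
Qed.

Lemma rank_inj P x y : P x = true -> P y = true -> rank P x = rank P y -> x = y.
Proof.
  intros Px Py E. pose proof (proj2 (rank_le_iff P x y Px Py)).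
  pose proof (proj2 (rank_le_iff P y x Py Px)). lia.
Qed.

Lemma rank_surj P M k : k < rank P M -> exists x, x < M /\ P x = true /\ rank P x = k.
Proof.
  induction M as [|M IH]; simpl; intro H; [lia|].
  destruct (lt_dec k (rank P M)) as [l|l].
  - destruct (IH l) as [x [? [? ?]]]. exists x; repeat split; auto.
  - destruct (P M) eqn:PM; [|lia]. exists M; repeat split; auto; lia.
Qed.

Lemma rank_predC P x : rank P x + rank (predC P) x = x.
Proof. induction x; simpl; auto. unfold predC at 2. destruct (P x); simpl; lia. Qed.

Lemma rank_ext P Q M : (forall x, x < M -> P x = Q x) -> rank P M = rank Q M.
Proof.
  induction M as [|M IH]; simpl; intros H; auto.
  rewrite IH by (intros; apply H; lia). rewrite H by lia. reflexivity.
Qed.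

Lemma rank_beyond P M y : (forall x, P x = true -> x < M) -> M <= y -> rank P y = rank P M.
Proof.
  intros H; induction 1 as [|y My IH]; auto. simpl.
  destruct (P y) eqn:Py; [apply H in Py; lia|lia].
Qed.

Lemma rank_interval P B d :
  (forall x, B <= x < B + d -> P x = true) -> rank P (B + d) = rank P B + d.
Proof.
  induction d as [|d IH]; intros H; [now rewrite !Nat.add_0_r|].
  rewrite Nat.add_succ_r. simpl. rewrite IH by (intros; apply H; lia). rewrite H by lia. lia.
Qed.

Definition dir_le (b : bool) (x y : nat) : bool := if b then x <=? y else y <=? x.

Lemma dir_le_rank b P x y :
  P x = true -> P y = true -> dir_le b x y = dir_le b (rank P x) (rank P y).
Proof.
  intros Px Py. apply eq_iff_eq_true. destruct b; unfold dir_le; rewrite !Nat.leb_le;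
  apply rank_le_iff; auto.
Qed.

Definition tilde_on (b : bool) (P : nat -> bool) : Structure :=
  fun x y => if P x && P y then dir_le b x y else x =? y.

Definition tilde_omega_dir (b : bool) : Structure :=
  if b then tilde_omega else tilde_omega_star.

Lemma tilde_omega_dir_eq b : tilde_omega_dir b = tilde_on b Nat.even.
Proof.
  apply functional_extensionality; intro x; apply functional_extensionality; intro y.
  destruct b; unfold tilde_omega_dir, tilde_omega, tilde_omega_star, tilde_on, dir_le;
  destruct (Nat.even x) eqn:Ex, (Nat.even y) eqn:Ey; simpl; try reflexivity;
  apply Nat.even_spec in Ex, Ey; destruct Ex as [a ->]; destruct Ey as [c ->];
  rewrite !Nat.div2_double; apply eq_iff_eq_true; rewrite !Nat.leb_le; lia.
Qed.

Lemma iso_tilde_on b b' P Q (f : nat -> nat) :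
  (forall x y, f x = f y -> x = y) -> (forall y, exists x, f x = y) ->
  (forall x, Q (f x) = P x) ->
  (forall x y, P x = true -> P y = true -> dir_le b x y = dir_le b' (f x) (f y)) ->
  iso (tilde_on b P) (tilde_on b' Q).
Proof.
  intros f_inj f_surj Qf f_dir.
  set (g y := epsilon (inhabits 0) (fun x => f x = y)).
  assert (fg : forall y, f (g y) = y) by (intro y; exact (epsilon_spec _ _ (f_surj y))).
  exists f, g; split; [|split]; [|exact fg|].
  - intro x. apply f_inj. rewrite fg. reflexivity.
  - intros i j. unfold tilde_on. rewrite !Qf.
    destruct (P i) eqn:Pi, (P j) eqn:Pj; simpl; auto;
    destruct (Nat.eqb_spec i j), (Nat.eqb_spec (f i) (f j)); subst; auto; exfalso; auto.
Qed.

(* The chain [P] is enumerated by [rank P] (reversed when [b] is false), the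
   antichain by [N + rank (predC P)]. *)
Lemma iso_tilde_on_finite b P M :
  (forall x, P x = true -> x < M) -> iso (tilde_on b P) (tilde_L (rank P M)).
Proof.
  intros P_lt. set (N := rank P M).
  assert (rank_lt_N : forall x, P x = true -> rank P x < N) by (intros; apply rank_lt; auto).
  assert (rank_N : forall y, M <= y -> rank P y = N) by (intros; apply rank_beyond; auto).
  change (tilde_L N) with (tilde_on true (fun z => z <? N)).
  set (f x := if P x then (if b then rank P x else N - 1 - rank P x) else N + rank (predC P) x).
  apply iso_tilde_on with (f := f).
  - intros x y. unfold f. destruct (P x) eqn:Px, (P y) eqn:Py; intro E.
    + apply (rank_inj P); auto. pose proof (rank_lt_N x Px); pose proof (rank_lt_N y Py).
      destruct b; lia.
    + pose proof (rank_lt_N x Px). destruct b; lia.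
    + pose proof (rank_lt_N y Py). destruct b; lia.
    + apply (rank_inj (predC P)); try apply predC_true; auto. lia.
  - intro y. destruct (lt_dec y N).
    + destruct (rank_surj P M (if b then y else N - 1 - y)) as [x [_ [Px E]]]. { destruct b; lia. }
      exists x. unfold f. rewrite Px. destruct b; lia.
    + destruct (rank_surj (predC P) (y - N + 1 + M) (y - N)) as [x [_ [Px E]]].
      { pose proof (rank_predC P (y - N + 1 + M)) as H. rewrite rank_N in H by lia.
        pose proof (rank_predC P M). lia. }
      exists x. apply predC_true in Px. unfold f. rewrite Px. lia.
  - intro x. unfold f. destruct (P x) eqn:Px.
    + apply Nat.ltb_lt. pose proof (rank_lt_N x Px). destruct b; lia.
    + apply Nat.ltb_ge. lia.
  - intros x y Px Py. unfold f. rewrite Px, Py, (dir_le_rank b P x y Px Py).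
    pose proof (rank_lt_N x Px); pose proof (rank_lt_N y Py).
    destruct b; [reflexivity|]. unfold dir_le. apply eq_iff_eq_true. rewrite !Nat.leb_le. lia.
Qed.

Lemma iso_tilde_on_infinite b P :
  (forall k, exists M, k < rank P M) -> (forall k, exists M, k < rank (predC P) M) ->
  iso (tilde_on b P) (tilde_omega_dir b).
Proof.
  intros P_inf P_coinf. rewrite tilde_omega_dir_eq.
  set (f x := if P x then 2 * rank P x else 2 * rank (predC P) x + 1).
  apply iso_tilde_on with (f := f).
  - intros x y. unfold f. destruct (P x) eqn:Px, (P y) eqn:Py; intro E; try lia.
    + apply (rank_inj P); auto. lia.
    + apply (rank_inj (predC P)); try apply predC_true; auto. lia.
  - intro y. destruct (Nat.Even_or_Odd y) as [[k ->]|[k ->]].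
    + destruct (P_inf k) as [M HM]. destruct (rank_surj P M k HM) as [x [_ [Px E]]].
      exists x. unfold f. rewrite Px. lia.
    + destruct (P_coinf k) as [M HM]. destruct (rank_surj _ M k HM) as [x [_ [Px E]]].
      exists x. apply predC_true in Px. unfold f. rewrite Px. lia.
  - intro x. unfold f. destruct (P x).
    + apply Nat.even_spec. eexists; reflexivity.
    + rewrite Nat.add_comm, Nat.even_add_mul_2. reflexivity.
  - intros x y Px Py. unfold f. rewrite Px, Py, (dir_le_rank b P x y Px Py).
    destruct b; unfold dir_le; apply eq_iff_eq_true; rewrite !Nat.leb_le; lia.
Qed.

Section Construction.

Variable next_size : nat -> nat.
Hypothesis next_size_gt : forall c, c < next_size c.
Variable modulus : (nat -> bool) -> nat -> nat.

Record stage := Stage { members : nat -> bool; size : nat; bound : nat }.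

(* The new bound lies beyond [modulus P j], so later stages do not change
   [P] there, and beyond [e], so every stage adds a non-member. *)
Definition extend (j : nat) (s : stage) : stage :=
  let e := bound s + (next_size (size s) - size s) in
  let P x := members s x || (bound s <=? x) && (x <? e) in
  Stage P (next_size (size s)) (Nat.max (modulus P j) e + 1).

Fixpoint stage_at (j : nat) : stage :=
  match j with
  | 0 => Stage (fun _ => false) 0 0
  | S j => extend j (stage_at j)
  end.

Definition limit (x : nat) : bool := members (stage_at (S x)) x.

Definition stage_ok (j : nat) (s : stage) : Prop :=
  (forall x, members s x = true -> x < bound s) /\
  rank (members s) (bound s) = size s /\ j <= size s /\ j + size s <= bound s.

Lemma extend_ok j s : stage_ok j s -> stage_ok (S j) (extend j s).
Proof.
  intros (below & rank_s & j_le & bound_ge). pose proof (next_size_gt (size s)).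
  unfold extend, stage_ok; cbn [members size bound].
  set (e := bound s + (next_size (size s) - size s)).
  set (P x := members s x || (bound s <=? x) && (x <? e)).
  assert (P_below : forall x, P x = true -> x < e).
  { intros x Px. unfold P in Px. apply orb_true_iff in Px as [Px|Px].
    - apply below in Px. unfold e. lia.
    - apply andb_true_iff in Px as [_ Px]. apply Nat.ltb_lt in Px. exact Px. }
  assert (P_old : forall x, x < bound s -> P x = members s x).
  { intros x Hx. unfold P. destruct (Nat.leb_spec (bound s) x); [lia|]. apply orb_false_r. }
  assert (P_new : forall x, bound s <= x < e -> P x = true).
  { intros x Hx. unfold P. apply orb_true_iff; right.
    apply andb_true_iff; split; [apply Nat.leb_le|apply Nat.ltb_lt]; lia. }
  split; [|split; [|split]].
  - intros x Px. apply P_below in Px. lia.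
  - rewrite (rank_beyond P e) by (auto; lia). unfold e at 1.
    rewrite rank_interval by (unfold e in P_new; exact P_new).
    rewrite (rank_ext P (members s)) by exact P_old. unfold e. lia.
  - lia.
  - unfold e. lia.
Qed.

Lemma stage_at_ok j : stage_ok j (stage_at j).
Proof.
  induction j as [|j IH].
  - repeat split; cbn; auto; discriminate.
  - apply extend_ok, IH.
Qed.

Lemma bound_mono j j' : j <= j' -> bound (stage_at j) <= bound (stage_at j').
Proof. induction 1; cbn; lia. Qed.

Lemma members_stable j j' x :
  j <= j' -> x < bound (stage_at j) -> members (stage_at j') x = members (stage_at j) x.
Proof.
  induction 1 as [|j' jj' IH]; intros Hx; auto. cbn. rewrite IH by exact Hx.
  pose proof (bound_mono j j' jj').
  destruct (Nat.leb_spec (bound (stage_at j')) x); [lia|]. apply orb_false_r.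
Qed.

Lemma limit_agree j x : x < bound (stage_at j) -> limit x = members (stage_at j) x.
Proof.
  intros Hx. unfold limit. destruct (le_lt_dec j (S x)).
  - apply members_stable; auto.
  - symmetry. apply members_stable; [lia|].
    destruct (stage_at_ok (S x)) as (_ & _ & _ & H). lia.
Qed.

Lemma modulus_lt_bound j : modulus (members (stage_at (S j))) j < bound (stage_at (S j)).
Proof. cbn. lia. Qed.

Lemma rank_limit j : rank limit (bound (stage_at j)) = size (stage_at j).
Proof.
  destruct (stage_at_ok j) as (_ & <- & _).
  apply rank_ext. intros; apply limit_agree; auto.
Qed.

Lemma iso_limit b : iso (tilde_on b limit) (tilde_omega_dir b).
Proof.
  apply iso_tilde_on_infinite; intro k; exists (bound (stage_at (S k)));
  pose proof (rank_limit (S k)); destruct (stage_at_ok (S k)) as (_ & _ & ? & ?).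
  - lia.
  - pose proof (rank_predC limit (bound (stage_at (S k)))). lia.
Qed.

Lemma iso_stage b j : iso (tilde_on b (members (stage_at j))) (tilde_L (size (stage_at j))).
Proof.
  destruct (stage_at_ok j) as (below & rank_j & _). rewrite <- rank_j.
  apply iso_tilde_on_finite. exact below.
Qed.

End Construction.

Lemma E0_sym p q : E0 p q -> E0 q p.
Proof. intros [k H]; exists k; intros; symmetry; auto. Qed.

Lemma E0_trans p q r : E0 p q -> E0 q r -> E0 p r.
Proof. intros [k H] [k' H']; exists (k + k'); intros n Hn. rewrite H, H'; auto; lia. Qed.

Lemma LD_tilde_L N : 2 <= N -> LD_Fstar (tilde_L N).
Proof.
  intros. exists (tilde_L N); split; [right; right; eauto|].
  exists (fun x => x), (fun x => x); auto.
Qed.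

Lemma LD_tilde_omega_dir b : LD_Fstar (tilde_omega_dir b).
Proof.
  exists (tilde_omega_dir b); split; [destruct b; [left|right; left]; reflexivity|].
  exists (fun x => x), (fun x => x); auto.
Qed.

Lemma LD_iso S K : LD_Fstar K -> iso S K -> LD_Fstar S.
Proof.
  intros (K' & FK' & f & g & gf & fg & fK) (h & k & kh & hk & hS).
  exists K'; split; auto. exists (fun x => f (h x)), (fun y => k (g y)).
  repeat split; intros; [rewrite gf; auto|rewrite hk; auto|rewrite hS, fK; reflexivity].
Qed.

Section Reduction.

Variable G : Structure -> Space.
Hypothesis G_continuous : continuous_on LD_Fstar G.
Hypothesis G_reduction :
  forall S S', LD_Fstar S -> LD_Fstar S' -> (iso S S' <-> E3 (G S) (G S')).

Lemma iso_E0 S S' m : LD_Fstar S -> LD_Fstar S' -> iso S S' -> E0 (G S m) (G S' m).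
Proof. intros HS HS' iso_SS'. exact (proj1 (G_reduction S S' HS HS') iso_SS' m). Qed.

Variables (b : bool) (m : nat).

Definition separated_beyond (S : Structure) (j k : nat) : Prop :=
  exists n, j <= n /\ G S m n <> G (tilde_omega_dir b) m n /\
    forall S', LD_Fstar S' -> (forall x y, x < k -> y < k -> S' x y = S x y) ->
      G S' m n = G S m n.

Lemma separated_beyond_ex S j :
  LD_Fstar S -> ~ E0 (G S m) (G (tilde_omega_dir b) m) -> exists k, separated_beyond S j k.
Proof.
  intros HS not_E0.
  assert (exists n, j <= n /\ G S m n <> G (tilde_omega_dir b) m n) as (n & jn & differ).
  { apply NNPP; intro C. apply not_E0. exists j. intros n jn.
    apply NNPP; intro D. apply C. eauto. }
  destruct (G_continuous S HS m n) as [k Hk]. exists k, n. auto.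
Qed.

Lemma not_frequently_separated :
  ~ (forall c, exists N, c < N /\ 2 <= N /\ ~ E0 (G (tilde_L N) m) (G (tilde_omega_dir b) m)).
Proof.
  intros bad.
  set (bad_size N := 2 <= N /\ ~ E0 (G (tilde_L N) m) (G (tilde_omega_dir b) m)).
  set (next_size c := epsilon (inhabits 0) (fun N => c < N /\ bad_size N)).
  assert (next_size_spec : forall c, c < next_size c /\ bad_size (next_size c))
    by (intro c; exact (epsilon_spec _ _ (bad c))).
  assert (next_size_gt : forall c, c < next_size c) by apply next_size_spec.
  set (modulus P j := epsilon (inhabits 0) (separated_beyond (tilde_on b P) j)).
  set (L := tilde_on b (limit next_size modulus)).
  destruct (iso_E0 L (tilde_omega_dir b) m) as [j agree_from_j].
  { apply (LD_iso _ _ (LD_tilde_omega_dir b)), iso_limit, next_size_gt. }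
  { apply LD_tilde_omega_dir. }
  { apply iso_limit, next_size_gt. }
  set (s := stage_at next_size modulus (S j)).
  destruct (next_size_spec (size (stage_at next_size modulus j))) as (_ & two_le & not_E0).
  change (next_size _) with (size s) in two_le, not_E0.
  set (T := tilde_on b (members s)).
  assert (LD_T : LD_Fstar T).
  { apply (LD_iso _ _ (LD_tilde_L _ two_le)), iso_stage, next_size_gt. }
  assert (T_sep : ~ E0 (G T m) (G (tilde_omega_dir b) m)).
  { intro C. apply not_E0, (E0_trans _ (G T m)); [|exact C].
    apply E0_sym, iso_E0; [exact LD_T|apply LD_tilde_L, two_le|apply iso_stage, next_size_gt]. }
  assert (T_sep_mod : separated_beyond T j (modulus (members s) j))
    by exact (epsilon_spec _ _ (separated_beyond_ex T j LD_T T_sep)).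
  destruct T_sep_mod as (n & jn & differ & frozen).
  apply differ. rewrite <- (frozen L).
  - apply agree_from_j, jn.
  - apply (LD_iso _ _ (LD_tilde_omega_dir b)), iso_limit, next_size_gt.
  - intros x y Hx Hy. pose proof (modulus_lt_bound next_size modulus j).
    unfold L, T, tilde_on.
    rewrite !(limit_agree next_size next_size_gt modulus (S j)) by (unfold s in *; lia).
    reflexivity.
Qed.

Lemma tilde_L_eventually_E0 :
  exists N0, forall N, N0 <= N -> 2 <= N -> E0 (G (tilde_L N) m) (G (tilde_omega_dir b) m).
Proof.
  apply NNPP; intro none. apply not_frequently_separated. intro c.
  apply NNPP; intro C. apply none. exists (S c). intros N cN two_le.
  apply NNPP; intro D. apply C. exists N. auto.
Qed.

End Reduction.

Lemma not_iso_tilde_omega_star : ~ iso tilde_omega tilde_omega_star.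
Proof.
  intros [f [g [gf [fg f_iso]]]].
  assert (f0_even : Nat.even (f 0) = true).
  { destruct (Nat.even (f 0)) eqn:E; auto.
    assert (H02 : tilde_omega_star (f 0) (f 2) = true) by (rewrite <- f_iso; reflexivity).
    unfold tilde_omega_star in H02. rewrite E in H02. apply Nat.eqb_eq, (f_equal g) in H02.
    rewrite !gf in H02. discriminate. }
  (* [f 0 + 2] lies below [f 0] in [tilde_omega_star], but nothing lies below [0] in [tilde_omega]. *)
  set (w := g (f 0 + 2)).
  assert (below_0 : tilde_omega w 0 = true).
  { rewrite f_iso. unfold w; rewrite fg. unfold tilde_omega_star.
    rewrite Nat.even_add, f0_even. apply Nat.leb_le.
    replace (f 0 + 2) with (S (S (f 0))) by lia. cbn. lia. }
  unfold tilde_omega in below_0. destruct (Nat.even w) eqn:Ew; cbn in below_0.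
  - apply Nat.leb_le in below_0. apply Nat.even_spec in Ew as [c Hc].
    assert (w = 0) as w0 by (rewrite Hc, Nat.div2_double in below_0; lia).
    assert (f w = f 0 + 2) as fw by (unfold w; apply fg). rewrite w0 in fw. lia.
  - apply Nat.eqb_eq in below_0. rewrite below_0 in Ew. discriminate.
Qed.

Theorem mainTheorem18 : ~ learnable_E3 LD_Fstar.
Proof.
  intros [G [G_continuous G_reduction]].
  assert (exists m, ~ E0 (G tilde_omega m) (G tilde_omega_star m)) as [m separated].
  { apply not_all_ex_not. intro C. apply not_iso_tilde_omega_star.
    apply (G_reduction _ _ (LD_tilde_omega_dir true) (LD_tilde_omega_dir false)). exact C. }
  destruct (tilde_L_eventually_E0 G G_continuous G_reduction true m) as [N0 E_omega].
  destruct (tilde_L_eventually_E0 G G_continuous G_reduction false m) as [N1 E_star].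
  apply separated, (E0_trans _ (G (tilde_L (N0 + N1 + 2)) m)).
  - apply E0_sym, E_omega; lia.
  - apply E_star; lia.
Qed.
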